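(* Let $\Lambda=[m,n]\cap\mathbb Z$, let $(\nu_j)$ be real, and let $m\le l\le r\le n$. Then for all $t\in\mathbb R$, $$\|[c_l(t),a_r^*]\|\ge|\langle e^{-2itH^\Lambda_{\rm eff}}\delta_l,\delta_r\rangle|,$$ where $c_l(t)=e^{itH_\Lambda}c_le^{-itH_\Lambda}$.
   Context: $\mathfrak G_\Lambda=\bigotimes_{j=m}^n\mathbb C^2$; $\sigma_j^{x,y,z}$ are the Pauli matrices $\begin{pmatrix}0&1\\1&0\end{pmatrix},\begin{pmatrix}0&-i\\i&0\end{pmatrix},\begin{pmatrix}1&0\\0&-1\end{pmatrix}$ acting on factor $j$. $H_\Lambda=-\sum_{j=m}^{n-1}(\sigma^x_j\sigma^x_{j+1}+\sigma^y_j\sigma^y_{j+1})-\sum_{j=m}^n\nu_j\sigma^z_j$. Define $a_j^*=\frac12(\sigma^x_j+i\sigma^y_j)$, $a_j=\frac12(\sigma^x_j-i\sigma^y_j)$, and the Jordan–Wigner operators $c_m=a_m$, $c_{m+j}=\sigma^z_m\sigma^z_{m+1}\cdots\sigma^z_{m+j-1}a_{m+j}$ for $1\le j\le n-m$. $H^\Lambda_{\rm eff}$ is the restriction of $(H_{\rm eff}\psi)_k=\psi_{k+1}+\psi_{k-1}+\nu_k\psi_k$ to $\ell^2([m,n]\cap\mathbb Z)$ (Dirichlet truncation), and $\delta_j$ are the standard basis vectors. *)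

From Stdlib Require Import Reals ZArith Arith ClassicalEpsilon.
Open Scope R_scope.

Record C := mkC { Cre : R; Cim : R }.
Definition C0 : C := mkC 0 0.
Definition C1 : C := mkC 1 0.
Definition Ci : C := mkC 0 1.
Definition RtoC (r : R) : C := mkC r 0.
Definition Cadd (x y : C) : C := mkC (Cre x + Cre y) (Cim x + Cim y).
Definition Copp (x : C) : C := mkC (- Cre x) (- Cim x).
Definition Csub (x y : C) : C := Cadd x (Copp y).
Definition Cmul (x y : C) : C :=
  mkC (Cre x * Cre y - Cim x * Cim y) (Cre x * Cim y + Cim x * Cre y).
Definition Cconj (x : C) : C := mkC (Cre x) (- Cim x).
Definition Cmod (x : C) : R := sqrt (Cre x ^ 2 + Cim x ^ 2).

Fixpoint Csum (N : nat) (f : nat -> C) : C :=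
  match N with O => C0 | S N' => Cadd (Csum N' f) (f N') end.
Fixpoint Rsumn (N : nat) (f : nat -> R) : R :=
  match N with O => 0 | S N' => Rsumn N' f + f N' end.

Definition Mat := nat -> nat -> C.
Definition Vec := nat -> C.
Definition Mid : Mat := fun i j => if Nat.eqb i j then C1 else C0.
Definition Madd (A B : Mat) : Mat := fun i j => Cadd (A i j) (B i j).
Definition Mopp (A : Mat) : Mat := fun i j => Copp (A i j).
Definition Msub (A B : Mat) : Mat := Madd A (Mopp B).
Definition Mscale (c : C) (A : Mat) : Mat := fun i j => Cmul c (A i j).
Definition Mmul (d : nat) (A B : Mat) : Mat :=
  fun i j => Csum d (fun k => Cmul (A i k) (B k j)).
Fixpoint Mpow (d : nat) (A : Mat) (k : nat) : Mat :=
  match k with O => Mid | S k' => Mmul d (Mpow d A k') A end.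
Fixpoint Msumn (N : nat) (f : nat -> Mat) : Mat :=
  match N with O => (fun _ _ => C0) | S N' => Madd (Msumn N' f) (f N') end.
Definition Mcomm (d : nat) (A B : Mat) : Mat := Msub (Mmul d A B) (Mmul d B A).
Definition Mapply (d : nat) (A : Mat) (v : Vec) : Vec :=
  fun i => Csum d (fun k => Cmul (A i k) (v k)).
Definition vnorm (d : nat) (v : Vec) : R :=
  sqrt (Rsumn d (fun i => Cmod (v i) ^ 2)).
Definition inner (d : nat) (u v : Vec) : C :=
  Csum d (fun i => Cmul (Cconj (u i)) (v i)).
Definition delta (p : nat) : Vec := fun i => if Nat.eqb i p then C1 else C0.

Definition Rlim (u : nat -> R) : R := epsilon (inhabits 0) (fun l => Un_cv u l).
Definition Clim (u : nat -> C) : C :=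
  mkC (Rlim (fun N => Cre (u N))) (Rlim (fun N => Cim (u N))).
Definition Rsup (P : R -> Prop) : R := epsilon (inhabits 0) (fun l => is_lub P l).

Definition Mexp (d : nat) (A : Mat) : Mat :=
  fun i j => Clim (fun N => Csum N (fun k => Cmul (RtoC (/ INR (fact k))) (Mpow d A k i j))).

Definition opnorm (d : nat) (A : Mat) : R :=
  Rsup (fun x => exists v : Vec, vnorm d v = 1 /\ x = vnorm d (Mapply d A v)).

Definition nsites (m n : Z) : nat := Z.to_nat (n - m + 1).
Definition hdim (m n : Z) : nat := 2 ^ nsites m n.
Definition loc (m j : Z) : nat := Z.to_nat (j - m).

(* 2x2 matrices, index false = first basis vector, true = second *)
Definition Mat2 := bool -> bool -> C.
Definition sx : Mat2 := fun x y => if xorb x y then C1 else C0.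
Definition sy : Mat2 := fun x y =>
  match x, y with false, true => Copp Ci | true, false => Ci | _, _ => C0 end.
Definition sz : Mat2 := fun x y =>
  match x, y with false, false => C1 | true, true => Copp C1 | _, _ => C0 end.

(* basis state a < d of the tensor product: bit k of a = state of site m+k.
   site_op d k P = P acting on tensor factor k. *)
Definition site_op (d k : nat) (P : Mat2) : Mat := fun a b =>
  if (Nat.ltb a d && Nat.ltb b d && Nat.eqb (Nat.clearbit a k) (Nat.clearbit b k))%bool
  then P (Nat.testbit a k) (Nat.testbit b k) else C0.

Definition sigx (m n j : Z) : Mat := site_op (hdim m n) (loc m j) sx.
Definition sigy (m n j : Z) : Mat := site_op (hdim m n) (loc m j) sy.
Definition sigz (m n j : Z) : Mat := site_op (hdim m n) (loc m j) sz.

Definition adag (m n j : Z) : Mat :=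
  Mscale (RtoC (1/2)) (Madd (sigx m n j) (Mscale Ci (sigy m n j))).
Definition aop (m n j : Z) : Mat :=
  Mscale (RtoC (1/2)) (Msub (sigx m n j) (Mscale Ci (sigy m n j))).

Fixpoint zstring (m n : Z) (k : nat) : Mat :=
  match k with
  | O => Mid
  | S k' => Mmul (hdim m n) (zstring m n k') (sigz m n (m + Z.of_nat k'))
  end.
Definition cJW (m n j : Z) : Mat := Mmul (hdim m n) (zstring m n (loc m j)) (aop m n j).

Definition Hchain (m n : Z) (nu : Z -> R) : Mat :=
  let d := hdim m n in
  Mopp (Madd
    (Msumn (nsites m n - 1) (fun k =>
       let j := (m + Z.of_nat k)%Z in
       Madd (Mmul d (sigx m n j) (sigx m n (j + 1)))
            (Mmul d (sigy m n j) (sigy m n (j + 1)))))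
    (Msumn (nsites m n) (fun k =>
       let j := (m + Z.of_nat k)%Z in
       Mscale (RtoC (nu j)) (sigz m n j)))).

Definition c_t (m n : Z) (nu : Z -> R) (l : Z) (t : R) : Mat :=
  let d := hdim m n in
  Mmul d (Mmul d (Mexp d (Mscale (mkC 0 t) (Hchain m n nu))) (cJW m n l))
         (Mexp d (Mscale (mkC 0 (- t)) (Hchain m n nu))).

(* H_eff^Lambda on l^2([m,n] ∩ Z), local index p <-> site m+p:
   (H ψ)_k = ψ_{k+1} + ψ_{k-1} + ν_k ψ_k, Dirichlet truncation *)
Definition Heff (m n : Z) (nu : Z -> R) : Mat := fun p q =>
  let L := nsites m n in
  if (Nat.ltb p L && Nat.ltb q L)%bool then
    (if Nat.eqb p q then RtoC (nu (m + Z.of_nat p)%Z)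
     else if (Nat.eqb p (S q) || Nat.eqb q (S p))%bool then C1 else C0)
  else C0.

(* Test the commutator on the all-spin-down vector Omega, the Jordan-Wigner vacuum: it is an
   eigenvector of H with eigenvalue E = sum_j nu_j and c_l Omega = 0, so
   [c_l(t), a_r^*] Omega = e^{itH} c_l e^{-itH} a_r^* Omega.  The one-flip states
   psi_j = a_j^* Omega span an H-invariant subspace on which H acts as E - 2 H_eff, hence
   e^{-itH} psi_r = sum_q (e^{-it(E - 2 H_eff)})_{qr} psi_q, while c_l psi_q = +-delta_{ql} Omega.
   The commutator therefore maps Omega to a unimodular multiple of (e^{2it H_eff})_{lr} Omega, and
   as H_eff is real symmetric this entry has modulus |<e^{-2it H_eff} delta_l, delta_r>|. *)

From Stdlib Require Import Reals ZArith Lra Lia Bool FunctionalExtensionality ClassicalEpsilon.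
Open Scope R_scope.

Lemma C_ext (x y : C) : Cre x = Cre y -> Cim x = Cim y -> x = y.
Proof. destruct x, y; simpl; intros; subst; reflexivity. Qed.

Ltac Cring := apply C_ext; simpl; first [ring | field].

Lemma Cre_Csum N f : Cre (Csum N f) = Rsumn N (fun i => Cre (f i)).
Proof. induction N; simpl; auto. rewrite IHN; auto. Qed.

Lemma Cim_Csum N f : Cim (Csum N f) = Rsumn N (fun i => Cim (f i)).
Proof. induction N; simpl; auto. rewrite IHN; auto. Qed.

Lemma Csum_ext N f g : (forall i, (i < N)%nat -> f i = g i) -> Csum N f = Csum N g.
Proof. induction N; simpl; intros; auto. rewrite IHN, H; auto. Qed.

Lemma Csum_add N f g : Csum N (fun i => Cadd (f i) (g i)) = Cadd (Csum N f) (Csum N g).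
Proof. induction N; simpl. Cring. rewrite IHN. Cring. Qed.

Lemma Csum_opp N f : Csum N (fun i => Copp (f i)) = Copp (Csum N f).
Proof. induction N; simpl. Cring. rewrite IHN. Cring. Qed.

Lemma Csum_mul_l N c f : Csum N (fun i => Cmul c (f i)) = Cmul c (Csum N f).
Proof. induction N; simpl. Cring. rewrite IHN. Cring. Qed.

Lemma Csum_mul_r N c f : Csum N (fun i => Cmul (f i) c) = Cmul (Csum N f) c.
Proof. induction N; simpl. Cring. rewrite IHN. Cring. Qed.

Lemma Csum_C0 N : Csum N (fun _ => C0) = C0.
Proof. induction N; simpl; auto. rewrite IHN. Cring. Qed.

Lemma Csum_comm N M f :
  Csum N (fun i => Csum M (fun j => f i j)) = Csum M (fun j => Csum N (fun i => f i j)).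
Proof. induction N; simpl. rewrite Csum_C0; auto. rewrite IHN, <- Csum_add; auto. Qed.

Lemma Csum_delta N p g :
  Csum N (fun i => if Nat.eqb i p then g i else C0) = if Nat.ltb p N then g p else C0.
Proof.
  induction N; simpl; auto. rewrite IHN.
  destruct (Nat.eqb_spec N p), (Nat.ltb_spec p N), (Nat.ltb_spec p (S N)); subst; try lia; Cring.
Qed.

Lemma Csum_delta_lt N p g :
  (p < N)%nat -> Csum N (fun i => if Nat.eqb i p then g i else C0) = g p.
Proof. intros Hp. rewrite Csum_delta. apply Nat.ltb_lt in Hp. now rewrite Hp. Qed.

Lemma Csum_shift N f : Csum (S N) f = Cadd (f 0%nat) (Csum N (fun i => f (S i))).
Proof.
  induction N. simpl. Cring.
  change (Csum (S (S N)) f) with (Cadd (Csum (S N) f) (f (S N))). rewrite IHN. simpl. Cring.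
Qed.

Lemma Cconj_Csum N f : Cconj (Csum N f) = Csum N (fun i => Cconj (f i)).
Proof. induction N; simpl. Cring. rewrite <- IHN. Cring. Qed.

Lemma Csum_mul N M (a b : nat -> C) :
  Cmul (Csum N a) (Csum M b) = Csum N (fun p => Csum M (fun q => Cmul (a p) (b q))).
Proof. rewrite <- Csum_mul_r. apply Csum_ext; intros. now rewrite Csum_mul_l. Qed.

Lemma Rsumn_ext N f g : (forall i, (i < N)%nat -> f i = g i) -> Rsumn N f = Rsumn N g.
Proof. induction N; simpl; intros; auto. rewrite IHN, H; auto. Qed.

Lemma Rsumn_add N f g : Rsumn N (fun i => f i + g i) = Rsumn N f + Rsumn N g.
Proof. induction N; simpl. ring. rewrite IHN. ring. Qed.

Lemma Rsumn_sub N f g : Rsumn N (fun i => f i - g i) = Rsumn N f - Rsumn N g.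
Proof. induction N; simpl. ring. rewrite IHN. ring. Qed.

Lemma Rsumn_mul_l N c f : Rsumn N (fun i => c * f i) = c * Rsumn N f.
Proof. induction N; simpl. ring. rewrite IHN. ring. Qed.

Lemma Rsumn_mul N M (a b : nat -> R) :
  Rsumn N a * Rsumn M b = Rsumn N (fun p => Rsumn M (fun q => a p * b q)).
Proof. induction N; simpl. ring. rewrite <- IHN, Rsumn_mul_l. ring. Qed.

Lemma Rsumn_le N f g : (forall i, (i < N)%nat -> f i <= g i) -> Rsumn N f <= Rsumn N g.
Proof.
  induction N; simpl; intros. lra.
  assert (f N <= g N) by auto. assert (Rsumn N f <= Rsumn N g) by auto. lra.
Qed.

Lemma Rsumn_nonneg N f : (forall i, (i < N)%nat -> 0 <= f i) -> 0 <= Rsumn N f.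
Proof. induction N; simpl; intros. lra. assert (0 <= f N) by auto. assert (0 <= Rsumn N f) by auto. lra. Qed.

Lemma Rsumn_comm N M f :
  Rsumn N (fun i => Rsumn M (fun j => f i j)) = Rsumn M (fun j => Rsumn N (fun i => f i j)).
Proof.
  induction N; simpl. induction M; simpl; auto. rewrite <- IHM; ring.
  rewrite IHN, <- Rsumn_add; auto.
Qed.

Lemma Rsumn_term_le N f k :
  (forall i, (i < N)%nat -> 0 <= f i) -> (k < N)%nat -> f k <= Rsumn N f.
Proof.
  induction N; intros; simpl. lia.
  destruct (Nat.eq_dec k N). subst.
  - assert (0 <= Rsumn N f) by (apply Rsumn_nonneg; auto). lra.
  - assert (f k <= Rsumn N f) by (apply IHN; auto; lia). assert (0 <= f N) by auto. lra.
Qed.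

Lemma Rsumn_delta N p g :
  Rsumn N (fun i => if Nat.eqb i p then g i else 0) = if Nat.ltb p N then g p else 0.
Proof.
  induction N; simpl; auto. rewrite IHN.
  destruct (Nat.eqb_spec N p), (Nat.ltb_spec p N), (Nat.ltb_spec p (S N)); subst; try lia; ring.
Qed.

Lemma Rsumn_sum_f_R0 f N : Rsumn (S N) f = sum_f_R0 f N.
Proof. induction N; simpl. ring. simpl in IHN. rewrite <- IHN. ring. Qed.

Definition Vadd (u v : Vec) : Vec := fun i => Cadd (u i) (v i).
Definition Vscale (c : C) (v : Vec) : Vec := fun i => Cmul c (v i).
Definition Vzero : Vec := fun _ => C0.
Definition Vsum (N : nat) (f : nat -> Vec) : Vec := fun i => Csum N (fun k => f k i).

Lemma Vscale_Vzero c : Vscale c Vzero = Vzero.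
Proof. extensionality i. unfold Vscale, Vzero. Cring. Qed.

Lemma Vsum_ext N f g : (forall k, (k < N)%nat -> f k = g k) -> Vsum N f = Vsum N g.
Proof. intros. extensionality i. apply Csum_ext. intros; rewrite H; auto. Qed.

Lemma Vsum_add N f g : Vsum N (fun k => Vadd (f k) (g k)) = Vadd (Vsum N f) (Vsum N g).
Proof. extensionality i. apply Csum_add. Qed.

Lemma Vsum_scale_r N f v : Vsum N (fun k => Vscale (f k) v) = Vscale (Csum N f) v.
Proof. extensionality i. apply Csum_mul_r. Qed.

Lemma Mapply_add d A B v : Mapply d (Madd A B) v = Vadd (Mapply d A v) (Mapply d B v).
Proof. extensionality i. unfold Mapply, Vadd, Madd. rewrite <- Csum_add. apply Csum_ext; intros. Cring. Qed.

Lemma Mapply_opp d A v : Mapply d (Mopp A) v = Vscale (Copp C1) (Mapply d A v).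
Proof. extensionality i. unfold Mapply, Vscale, Mopp. rewrite <- Csum_mul_l. apply Csum_ext; intros. Cring. Qed.

Lemma Mapply_scale d c A v : Mapply d (Mscale c A) v = Vscale c (Mapply d A v).
Proof. extensionality i. unfold Mapply, Vscale, Mscale. rewrite <- Csum_mul_l. apply Csum_ext; intros. Cring. Qed.

Lemma Mapply_Msumn d N f v : Mapply d (Msumn N f) v = Vsum N (fun k => Mapply d (f k) v).
Proof.
  extensionality i. unfold Vsum. induction N; simpl.
  - unfold Mapply. transitivity (Csum d (fun _ => C0)); [apply Csum_ext; intros; Cring | apply Csum_C0].
  - rewrite <- IHN. unfold Mapply, Madd. rewrite <- Csum_add. apply Csum_ext; intros. Cring.
Qed.

Lemma Mapply_mul d A B v : Mapply d (Mmul d A B) v = Mapply d A (Mapply d B v).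
Proof.
  extensionality i. unfold Mapply, Mmul.
  transitivity (Csum d (fun k => Csum d (fun p => Cmul (A i p) (Cmul (B p k) (v k))))).
  - apply Csum_ext; intros. rewrite <- Csum_mul_r. apply Csum_ext; intros. Cring.
  - rewrite Csum_comm. apply Csum_ext; intros. now rewrite <- Csum_mul_l.
Qed.

Lemma Mapply_Vscale d A c v : Mapply d A (Vscale c v) = Vscale c (Mapply d A v).
Proof. extensionality i. unfold Mapply, Vscale. rewrite <- Csum_mul_l. apply Csum_ext; intros. Cring. Qed.

Lemma Mapply_Vzero d A : Mapply d A Vzero = Vzero.
Proof.
  extensionality i. unfold Mapply, Vzero.
  transitivity (Csum d (fun _ => C0)); [apply Csum_ext; intros; Cring | apply Csum_C0].
Qed.

Lemma Mapply_Vsum d A N f : Mapply d A (Vsum N f) = Vsum N (fun k => Mapply d A (f k)).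
Proof.
  extensionality i. unfold Mapply, Vsum.
  transitivity (Csum d (fun p => Csum N (fun k => Cmul (A i p) (f k p)))).
  - apply Csum_ext; intros. now rewrite Csum_mul_l.
  - apply Csum_comm.
Qed.

Lemma Mapply_delta d A b : (b < d)%nat -> Mapply d A (delta b) = fun a => A a b.
Proof.
  intros Hb. extensionality a. unfold Mapply, delta.
  rewrite <- (Csum_delta_lt d b (fun k => A a k)) by auto.
  apply Csum_ext; intros k _. destruct (Nat.eqb k b); Cring.
Qed.

(** * Norms and convergence *)

(* The l1 norm |Re x| + |Im x| dominates [Cmod] and avoids square roots in the estimates. *)
Definition Cnorm1 (x : C) : R := Rabs (Cre x) + Rabs (Cim x).

Lemma Cnorm1_ge0 x : 0 <= Cnorm1 x.
Proof. unfold Cnorm1. pose proof (Rabs_pos (Cre x)); pose proof (Rabs_pos (Cim x)); lra. Qed.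

Lemma Cnorm1_add x y : Cnorm1 (Cadd x y) <= Cnorm1 x + Cnorm1 y.
Proof.
  unfold Cnorm1; simpl.
  pose proof (Rabs_triang (Cre x) (Cre y)); pose proof (Rabs_triang (Cim x) (Cim y)); lra.
Qed.

Lemma Cnorm1_mul x y : Cnorm1 (Cmul x y) <= Cnorm1 x * Cnorm1 y.
Proof.
  unfold Cnorm1; simpl.
  assert (Rabs (Cre x * Cre y - Cim x * Cim y) <= Rabs (Cre x) * Rabs (Cre y) + Rabs (Cim x) * Rabs (Cim y)).
  { unfold Rminus. eapply Rle_trans. apply Rabs_triang. rewrite Rabs_Ropp, !Rabs_mult. lra. }
  assert (Rabs (Cre x * Cim y + Cim x * Cre y) <= Rabs (Cre x) * Rabs (Cim y) + Rabs (Cim x) * Rabs (Cre y)).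
  { eapply Rle_trans. apply Rabs_triang. rewrite !Rabs_mult. lra. }
  nra.
Qed.

Lemma Cnorm1_Csum N f : Cnorm1 (Csum N f) <= Rsumn N (fun i => Cnorm1 (f i)).
Proof.
  induction N; simpl. unfold Cnorm1; simpl; rewrite Rabs_R0; lra.
  eapply Rle_trans. apply Cnorm1_add. lra.
Qed.

Lemma Rabs_Cre_le x : Rabs (Cre x) <= Cnorm1 x.
Proof. unfold Cnorm1; pose proof (Rabs_pos (Cim x)); lra. Qed.

Lemma Rabs_Cim_le x : Rabs (Cim x) <= Cnorm1 x.
Proof. unfold Cnorm1; pose proof (Rabs_pos (Cre x)); lra. Qed.

Lemma Cnorm1_RtoC r : Cnorm1 (RtoC r) = Rabs r.
Proof. unfold Cnorm1; simpl; rewrite Rabs_R0; ring. Qed.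

Lemma Cmod_ge0 x : 0 <= Cmod x.
Proof. apply sqrt_pos. Qed.

Lemma Cmod_sqr x : Cmod x ^ 2 = Cre x ^ 2 + Cim x ^ 2.
Proof. unfold Cmod. rewrite <- Rsqr_pow2, Rsqr_sqrt; auto. nra. Qed.

Lemma Cmod_mul x y : Cmod (Cmul x y) = Cmod x * Cmod y.
Proof. unfold Cmod. rewrite <- sqrt_mult by nra. f_equal. simpl. ring. Qed.

Lemma Cmod_conj x : Cmod (Cconj x) = Cmod x.
Proof. unfold Cmod. simpl. f_equal. ring. Qed.

Lemma Cmod_C1 : Cmod C1 = 1.
Proof. unfold Cmod. simpl. replace (1 * (1 * 1) + 0 * (0 * 1)) with 1 by ring. apply sqrt_1. Qed.

Lemma Cmod_sqr_le_Cnorm1 x : Cmod x ^ 2 <= Cnorm1 x ^ 2.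
Proof.
  rewrite Cmod_sqr. unfold Cnorm1. pose proof (Rabs_pos (Cre x)); pose proof (Rabs_pos (Cim x)).
  rewrite <- (pow2_abs (Cre x)), <- (pow2_abs (Cim x)). nra.
Qed.

Definition Ccv (u : nat -> C) (z : C) :=
  Un_cv (fun n => Cre (u n)) (Cre z) /\ Un_cv (fun n => Cim (u n)) (Cim z).

Lemma Rlim_eq u l : Un_cv u l -> Rlim u = l.
Proof. intros. unfold Rlim. apply UL_sequence with u; auto. apply epsilon_spec. exists l; auto. Qed.

Lemma Clim_eq u z : Ccv u z -> Clim u = z.
Proof. intros [H1 H2]. unfold Clim. rewrite (Rlim_eq _ _ H1), (Rlim_eq _ _ H2). destruct z; auto. Qed.

Lemma Un_cv_ext u v l : (forall n, u n = v n) -> Un_cv u l -> Un_cv v l.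
Proof. intros E H eps He. destruct (H eps He) as [N HN]. exists N; intros. rewrite <- E; auto. Qed.

Lemma Un_cv_const c : Un_cv (fun _ => c) c.
Proof. intros eps He. exists 0%nat. intros. unfold Rdist. rewrite Rminus_diag, Rabs_R0; lra. Qed.

Lemma Un_cv_S u l : Un_cv (fun n => u (S n)) l -> Un_cv u l.
Proof.
  intros H eps He. destruct (H eps He) as [N HN]. exists (S N). intros.
  destruct n. lia. apply HN. lia.
Qed.

Lemma Un_cv_squeeze0 u v : (forall n, Rabs (u n) <= v n) -> Un_cv v 0 -> Un_cv u 0.
Proof.
  intros H Hv eps He. destruct (Hv eps He) as [N HN]. exists N; intros.
  specialize (HN n H0). specialize (H n). unfold Rdist in *. rewrite Rminus_0_r in *.
  pose proof (Rle_abs (v n)). lra.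
Qed.

Lemma Ccv_ext u v z : (forall n, u n = v n) -> Ccv u z -> Ccv v z.
Proof. intros E [H1 H2]; split; eapply Un_cv_ext; eauto; intros; simpl; rewrite E; auto. Qed.

Lemma Ccv_const c : Ccv (fun _ => c) c.
Proof. split; apply Un_cv_const. Qed.

Lemma Ccv_S u z : Ccv (fun n => u (S n)) z -> Ccv u z.
Proof. intros [H1 H2]; split; apply Un_cv_S; auto. Qed.

Lemma Ccv_add u v a b : Ccv u a -> Ccv v b -> Ccv (fun n => Cadd (u n) (v n)) (Cadd a b).
Proof. intros [? ?] [? ?]; split; simpl; apply CV_plus; auto. Qed.

Lemma Ccv_mul u v a b : Ccv u a -> Ccv v b -> Ccv (fun n => Cmul (u n) (v n)) (Cmul a b).
Proof.
  intros [? ?] [? ?]; split; simpl.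
  - apply CV_minus; apply CV_mult; auto.
  - apply CV_plus; apply CV_mult; auto.
Qed.

Lemma Ccv_Csum M (u : nat -> nat -> C) (z : nat -> C) :
  (forall q, (q < M)%nat -> Ccv (fun n => u n q) (z q)) -> Ccv (fun n => Csum M (u n)) (Csum M z).
Proof. induction M; intros; simpl. apply Ccv_const. apply Ccv_add; auto. Qed.

Lemma Rseries_cv_comparison (a b : nat -> R) : (forall k, Rabs (a k) <= b k) ->
  (exists l, Un_cv (fun N => Rsumn N b) l) -> exists l, Un_cv (fun N => Rsumn N a) l.
Proof.
  intros Hab [lb Hb].
  assert (Hb' : {l | Un_cv (fun N => sum_f_R0 b N) l}).
  { exists lb. intros eps He. destruct (Hb eps He) as [N HN]. exists N; intros.
    rewrite <- Rsumn_sum_f_R0. apply HN; lia. }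
  (* split [a] into its positive and negative parts, each dominated by [b] *)
  destruct (Rseries_CV_comp (fun k => (Rabs (a k) + a k) / 2) b) as [l1 H1]; auto.
  { intros. specialize (Hab n). revert Hab. unfold Rabs. destruct (Rcase_abs (a n)); split; lra. }
  destruct (Rseries_CV_comp (fun k => (Rabs (a k) - a k) / 2) b) as [l2 H2]; auto.
  { intros. specialize (Hab n). revert Hab. unfold Rabs. destruct (Rcase_abs (a n)); split; lra. }
  exists (l1 - l2). apply Un_cv_S.
  apply Un_cv_ext with (fun N => sum_f_R0 (fun k => (Rabs (a k) + a k) / 2) N
                                 - sum_f_R0 (fun k => (Rabs (a k) - a k) / 2) N).
  - intros. rewrite <- !Rsumn_sum_f_R0, <- Rsumn_sub. apply Rsumn_ext; intros. field.
  - apply CV_minus; auto.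
Qed.

Lemma Cseries_cv_comparison (u : nat -> C) (b : nat -> R) : (forall k, Cnorm1 (u k) <= b k) ->
  (exists l, Un_cv (fun N => Rsumn N b) l) -> Ccv (fun N => Csum N u) (Clim (fun N => Csum N u)).
Proof.
  intros Hb Hl.
  destruct (Rseries_cv_comparison (fun k => Cre (u k)) b) as [l1 H1]; auto.
  { intros; eapply Rle_trans. apply Rabs_Cre_le. auto. }
  destruct (Rseries_cv_comparison (fun k => Cim (u k)) b) as [l2 H2]; auto.
  { intros; eapply Rle_trans. apply Rabs_Cim_le. auto. }
  assert (Ccv (fun N => Csum N u) (mkC l1 l2)).
  { split; simpl; eapply Un_cv_ext; eauto; intros; simpl; [rewrite Cre_Csum | rewrite Cim_Csum]; auto. }
  now rewrite (Clim_eq _ _ H).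
Qed.

Lemma exp_series_cv x : Un_cv (fun N => Rsumn N (fun k => / INR (fact k) * x ^ k)) (exp x).
Proof.
  apply Un_cv_S. unfold exp. destruct (exist_exp x) as [l Hl]. cbn [proj1_sig].
  intros eps He. destruct (Hl eps He) as [N HN]. exists N; intros.
  rewrite Rsumn_sum_f_R0. apply HN; auto.
Qed.

Lemma Csum_triangle N (f : nat -> nat -> C) :
  Csum N (fun k => Csum (S k) (fun p => f p (k - p)%nat)) = Csum N (fun p => Csum (N - p) (fun q => f p q)).
Proof.
  induction N. reflexivity.
  change (Csum (S N) (fun k => Csum (S k) (fun p => f p (k - p)%nat))) with
    (Cadd (Csum N (fun k => Csum (S k) (fun p => f p (k - p)%nat))) (Csum (S N) (fun p => f p (N - p)%nat))).
  rewrite IHN.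
  rewrite (Csum_ext (S N) (fun p => Csum (S N - p) (fun q => f p q))
             (fun p => Cadd (Csum (N - p) (fun q => f p q)) (f p (N - p)%nat))).
  2:{ intros. now replace (S N - i)%nat with (S (N - i)) by lia. }
  rewrite Csum_add. f_equal. simpl. rewrite Nat.sub_diag. simpl. Cring.
Qed.

Lemma Rsumn_triangle N (f : nat -> nat -> R) :
  Rsumn N (fun k => Rsumn (S k) (fun p => f p (k - p)%nat)) = Rsumn N (fun p => Rsumn (N - p) (fun q => f p q)).
Proof.
  induction N. reflexivity.
  change (Rsumn (S N) (fun k => Rsumn (S k) (fun p => f p (k - p)%nat))) with
    (Rsumn N (fun k => Rsumn (S k) (fun p => f p (k - p)%nat)) + Rsumn (S N) (fun p => f p (N - p)%nat)).
  rewrite IHN.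
  rewrite (Rsumn_ext (S N) (fun p => Rsumn (S N - p) (fun q => f p q))
             (fun p => Rsumn (N - p) (fun q => f p q) + f p (N - p)%nat)).
  2:{ intros. now replace (S N - i)%nat with (S (N - i)) by lia. }
  rewrite Rsumn_add. simpl. rewrite Nat.sub_diag. simpl. ring.
Qed.

Lemma Cnorm1_Csum_tail_le (b : nat -> C) (beta : nat -> R) M' M :
  (forall q, Cnorm1 (b q) <= beta q) -> (M' <= M)%nat ->
  Cnorm1 (Csub (Csum M b) (Csum M' b)) <= Rsumn M beta - Rsumn M' beta.
Proof.
  intros Hb H. induction H.
  - replace (Csub (Csum M' b) (Csum M' b)) with C0 by Cring. unfold Cnorm1; simpl; rewrite Rabs_R0; lra.
  - replace (Csub (Csum (S m) b) (Csum M' b)) with (Cadd (Csub (Csum m b) (Csum M' b)) (b m)) by (simpl; Cring).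
    eapply Rle_trans. apply Cnorm1_add. simpl. specialize (Hb m). lra.
Qed.

(* Dominated version of Mertens' theorem: the remainder [sum a * sum b - Cauchy product]
   is bounded by the same remainder for the dominating series, which tends to 0. *)
Lemma Cauchy_product_cv (a b : nat -> C) (al be : nat -> R) la lb sa sb :
  (forall p, Cnorm1 (a p) <= al p) -> (forall q, Cnorm1 (b q) <= be q) ->
  Ccv (fun N => Csum N a) la -> Ccv (fun N => Csum N b) lb ->
  Un_cv (fun N => Rsumn N al) sa -> Un_cv (fun N => Rsumn N be) sb ->
  Un_cv (fun N => Rsumn N (fun k => Rsumn (S k) (fun p => al p * be (k - p)%nat))) (sa * sb) ->
  Ccv (fun N => Csum N (fun k => Csum (S k) (fun p => Cmul (a p) (b (k - p)%nat)))) (Cmul la lb).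
Proof.
  intros Ha Hb [Ha1 Ha2] [Hb1 Hb2] Hsa Hsb Hs.
  set (rem N := Csub (Cmul (Csum N a) (Csum N b))
                     (Csum N (fun k => Csum (S k) (fun p => Cmul (a p) (b (k - p)%nat))))).
  set (rho N := Rsumn N al * Rsumn N be
                - Rsumn N (fun k => Rsumn (S k) (fun p => al p * be (k - p)%nat))).
  assert (Hrho : Un_cv rho 0).
  { replace 0 with (sa * sb - sa * sb) by ring. apply CV_minus; auto. apply CV_mult; auto. }
  assert (Hrem : forall N, Cnorm1 (rem N) <= rho N).
  { intros N. unfold rem, rho.
    rewrite (Csum_triangle N (fun p q => Cmul (a p) (b q))), (Rsumn_triangle N (fun p q => al p * be q)),
            Csum_mul, Rsumn_mul.
    replace (Csub _ _) with (Csum N (fun p => Cmul (a p) (Csub (Csum N b) (Csum (N - p) b)))).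
    2:{ unfold Csub. rewrite <- Csum_opp, <- Csum_add. apply Csum_ext; intros. rewrite !Csum_mul_l. Cring. }
    replace (_ - _) with (Rsumn N (fun p => al p * (Rsumn N be - Rsumn (N - p) be))).
    2:{ rewrite <- Rsumn_sub. apply Rsumn_ext; intros. rewrite !Rsumn_mul_l. ring. }
    eapply Rle_trans. apply Cnorm1_Csum.
    apply Rsumn_le; intros. eapply Rle_trans. apply Cnorm1_mul.
    apply Rmult_le_compat; try apply Cnorm1_ge0; auto.
    apply Cnorm1_Csum_tail_le; auto; lia. }
  split.
  - apply Un_cv_ext with (fun N => Cre (Cmul (Csum N a) (Csum N b)) - Cre (rem N)).
    { intros; unfold rem; simpl; ring. }
    replace (Cre (Cmul la lb)) with (Cre (Cmul la lb) - 0) by ring. apply CV_minus.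
    + simpl. apply CV_minus; apply CV_mult; auto.
    + apply Un_cv_squeeze0 with rho; auto. intros; eapply Rle_trans. apply Rabs_Cre_le. auto.
  - apply Un_cv_ext with (fun N => Cim (Cmul (Csum N a) (Csum N b)) - Cim (rem N)).
    { intros; unfold rem; simpl; ring. }
    replace (Cim (Cmul la lb)) with (Cim (Cmul la lb) - 0) by ring. apply CV_minus.
    + simpl. apply CV_plus; apply CV_mult; auto.
    + apply Un_cv_squeeze0 with rho; auto. intros; eapply Rle_trans. apply Rabs_Cim_le. auto.
Qed.

Lemma exp_Cauchy_product_cv x y :
  Un_cv (fun N => Rsumn N (fun k => Rsumn (S k)
     (fun p => (/ INR (fact p) * x ^ p) * (/ INR (fact (k - p)) * y ^ (k - p))))) (exp x * exp y).
Proof.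
  rewrite <- exp_plus. eapply Un_cv_ext. 2: apply exp_series_cv. intros N. apply Rsumn_ext. intros k _.
  rewrite binomial, <- Rsumn_sum_f_R0, <- Rsumn_mul_l. apply Rsumn_ext. intros p Hp.
  unfold Binomial.C. field. split; [apply INR_fact_neq_0 | split; apply INR_fact_neq_0].
Qed.

(** * The matrix exponential *)

Definition Mnorm1 (d : nat) (K : Mat) : R := Rsumn d (fun p => Rsumn d (fun q => Cnorm1 (K p q))).

Lemma Mnorm1_ge0 d K : 0 <= Mnorm1 d K.
Proof. apply Rsumn_nonneg; intros; apply Rsumn_nonneg; intros; apply Cnorm1_ge0. Qed.

Lemma col_Cnorm1_le_Mnorm1 d K j : (j < d)%nat -> Rsumn d (fun p => Cnorm1 (K p j)) <= Mnorm1 d K.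
Proof.
  intros. unfold Mnorm1. rewrite Rsumn_comm.
  apply (Rsumn_term_le d (fun q => Rsumn d (fun p => Cnorm1 (K p q)))); auto.
  intros; apply Rsumn_nonneg; intros; apply Cnorm1_ge0.
Qed.

Lemma Cnorm1_Mpow_le d K k i j : (j < d)%nat -> Cnorm1 (Mpow d K k i j) <= Mnorm1 d K ^ k.
Proof.
  revert i j. induction k; intros i j Hj; simpl.
  - unfold Mid. destruct (Nat.eqb i j); unfold Cnorm1; simpl; rewrite ?Rabs_R0, ?Rabs_R1; lra.
  - unfold Mmul. eapply Rle_trans. apply Cnorm1_Csum.
    apply Rle_trans with (Rsumn d (fun p => Mnorm1 d K ^ k * Cnorm1 (K p j))).
    + apply Rsumn_le; intros. eapply Rle_trans. apply Cnorm1_mul.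
      apply Rmult_le_compat_r. apply Cnorm1_ge0. auto.
    + rewrite Rsumn_mul_l, (Rmult_comm (Mnorm1 d K ^ k)). apply Rmult_le_compat_r.
      apply pow_le, Mnorm1_ge0. apply col_Cnorm1_le_Mnorm1; auto.
Qed.

Definition exp_term (d : nat) (K : Mat) (i j k : nat) : C := Cmul (RtoC (/ INR (fact k))) (Mpow d K k i j).

Lemma inv_fact_pos k : 0 < / INR (fact k).
Proof. apply Rinv_0_lt_compat, lt_0_INR, lt_O_fact. Qed.

Lemma Cnorm1_exp_term_le d K i j k : (j < d)%nat ->
  Cnorm1 (exp_term d K i j k) <= / INR (fact k) * Mnorm1 d K ^ k.
Proof.
  intros. unfold exp_term. eapply Rle_trans. apply Cnorm1_mul.
  rewrite Cnorm1_RtoC, Rabs_right by (left; apply inv_fact_pos).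
  apply Rmult_le_compat_l. left; apply inv_fact_pos. apply Cnorm1_Mpow_le; auto.
Qed.

Lemma Mexp_cv d K i j : (j < d)%nat -> Ccv (fun N => Csum N (exp_term d K i j)) (Mexp d K i j).
Proof.
  intros. apply Cseries_cv_comparison with (fun k => / INR (fact k) * Mnorm1 d K ^ k).
  - intros; apply Cnorm1_exp_term_le; auto.
  - exists (exp (Mnorm1 d K)). apply exp_series_cv.
Qed.

Lemma Mexp_eq d K i j z : Ccv (fun N => Csum N (exp_term d K i j)) z -> Mexp d K i j = z.
Proof. apply Clim_eq. Qed.

Fixpoint Cpow (c : C) (k : nat) : C := match k with O => C1 | S k' => Cmul (Cpow c k') c end.

Lemma Cnorm1_Cpow_le c p : Cnorm1 (Cpow c p) <= Cnorm1 c ^ p.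
Proof.
  induction p; simpl. unfold Cnorm1; simpl; rewrite Rabs_R0, Rabs_R1; lra.
  eapply Rle_trans. apply Cnorm1_mul. rewrite Rmult_comm.
  apply Rmult_le_compat_l. apply Cnorm1_ge0. auto.
Qed.

Definition Cexp (c : C) : C := Mexp 1 (fun _ _ => c) 0%nat 0%nat.

Lemma Mpow_dim1 A k : Mpow 1 A k 0%nat 0%nat = Cpow (A 0%nat 0%nat) k.
Proof. induction k; simpl. reflexivity. unfold Mmul. simpl. rewrite IHk. Cring. Qed.

Lemma Mexp_dim1 A : Mexp 1 A 0%nat 0%nat = Cexp (A 0%nat 0%nat).
Proof. unfold Cexp, Mexp. f_equal. extensionality N. apply Csum_ext; intros. now rewrite !Mpow_dim1. Qed.

Lemma Cexp_cv c : Ccv (fun N => Csum N (fun k => Cmul (RtoC (/ INR (fact k))) (Cpow c k))) (Cexp c).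
Proof.
  eapply Ccv_ext. 2: apply (Mexp_cv 1 (fun _ _ => c) 0%nat 0%nat); lia.
  intros. apply Csum_ext; intros. unfold exp_term. now rewrite Mpow_dim1.
Qed.

(* For [p > k], [Binomial.C k p] is [k!/p!] (truncated subtraction), not 0. *)
Definition binom (k p : nat) : R := if Nat.leb p k then Binomial.C k p else 0.

Lemma binom_0 k : binom k 0 = 1.
Proof. unfold binom, Binomial.C. simpl. rewrite Nat.sub_0_r. field. apply INR_fact_neq_0. Qed.

Lemma binom_gt k p : (k < p)%nat -> binom k p = 0.
Proof. intros. unfold binom. destruct (Nat.leb_spec p k); auto; lia. Qed.

Lemma binom_pascal k p : binom (S k) (S p) = binom k p + binom k (S p).
Proof.
  unfold binom.
  destruct (Nat.leb_spec (S p) (S k)), (Nat.leb_spec p k), (Nat.leb_spec (S p) k); try lia.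
  - rewrite pascal by lia. ring.
  - replace p with k by lia. unfold Binomial.C. rewrite !Nat.sub_diag.
    field; repeat split; apply INR_fact_neq_0.
  - ring.
Qed.

Lemma Csum_pascal k (g : nat -> nat -> C) :
  Cadd (Csum (S k) (fun p => Cmul (RtoC (binom k p)) (g (S p) (k - p)%nat)))
       (Csum (S k) (fun p => Cmul (RtoC (binom k p)) (g p (S (k - p)))))
  = Csum (S (S k)) (fun p => Cmul (RtoC (binom (S k) p)) (g p (S k - p)%nat)).
Proof.
  rewrite (Csum_shift (S k) (fun p => Cmul (RtoC (binom (S k) p)) (g p (S k - p)%nat))), binom_0.
  rewrite (Csum_ext (S k) (fun p => Cmul (RtoC (binom (S k) (S p))) (g (S p) (S k - S p)%nat))
             (fun p => Cadd (Cmul (RtoC (binom k p)) (g (S p) (k - p)%nat))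
                            (Cmul (RtoC (binom k (S p))) (g (S p) (k - p)%nat)))).
  2:{ intros. rewrite binom_pascal. Cring. }
  rewrite Csum_add, (Csum_shift k (fun p => Cmul (RtoC (binom k p)) (g p (S (k - p))))), binom_0.
  change (Csum (S k) (fun p => Cmul (RtoC (binom k (S p))) (g (S p) (k - p)%nat))) with
    (Cadd (Csum k (fun p => Cmul (RtoC (binom k (S p))) (g (S p) (k - p)%nat)))
          (Cmul (RtoC (binom k (S k))) (g (S k) (k - k)%nat))).
  rewrite (binom_gt k (S k)) by lia.
  rewrite (Csum_ext k (fun p => Cmul (RtoC (binom k (S p))) (g (S p) (S (k - S p))))
             (fun p => Cmul (RtoC (binom k (S p))) (g (S p) (k - p)%nat))).
  2:{ intros. now replace (S (k - S i)) with (k - i)%nat by lia. }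
  rewrite Nat.sub_0_r. Cring.
Qed.

Definition Mshift (c : C) (B : Mat) : Mat := Madd (Mscale c Mid) B.

Lemma Mpow_Mshift_S L c B k i j : (j < L)%nat ->
  Mpow L (Mshift c B) (S k) i j =
  Cadd (Cmul c (Mpow L (Mshift c B) k i j)) (Csum L (fun q => Cmul (Mpow L (Mshift c B) k i q) (B q j))).
Proof.
  intros Hj. simpl. unfold Mmul.
  rewrite (Csum_ext L _ (fun q => Cadd (Cmul c (if Nat.eqb q j then Mpow L (Mshift c B) k i q else C0))
                                       (Cmul (Mpow L (Mshift c B) k i q) (B q j)))).
  - rewrite Csum_add, Csum_mul_l, Csum_delta_lt; auto.
  - intros q _. unfold Mshift, Madd, Mscale, Mid. destruct (Nat.eqb q j); Cring.
Qed.

Lemma Mpow_Mshift L c B k i j : (j < L)%nat ->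
  Mpow L (Mshift c B) k i j =
  Csum (S k) (fun p => Cmul (RtoC (binom k p)) (Cmul (Cpow c p) (Mpow L B (k - p) i j))).
Proof.
  revert i j. induction k; intros i j Hj.
  - simpl. rewrite binom_0. Cring.
  - rewrite Mpow_Mshift_S, IHk by auto.
    rewrite (Csum_ext L _ (fun q => Csum (S k) (fun p =>
               Cmul (RtoC (binom k p)) (Cmul (Cpow c p) (Cmul (Mpow L B (k - p) i q) (B q j)))))).
    2:{ intros. rewrite IHk, <- Csum_mul_r by auto. apply Csum_ext; intros. Cring. }
    rewrite Csum_comm, <- Csum_mul_l.
    rewrite <- (Csum_pascal k (fun p m => Cmul (Cpow c p) (Mpow L B m i j))).
    f_equal; apply Csum_ext; intros.
    + simpl. Cring.
    + rewrite !Csum_mul_l. reflexivity.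
Qed.

(* Binomial expansion of [(c + B)^k], then the Cauchy product of the two exponential series. *)
Lemma Mexp_Mshift L c B i j : (j < L)%nat -> Mexp L (Mshift c B) i j = Cmul (Cexp c) (Mexp L B i j).
Proof.
  intros Hj. apply Mexp_eq.
  apply Ccv_ext with (fun N => Csum N (fun k => Csum (S k) (fun p =>
     Cmul (Cmul (RtoC (/ INR (fact p))) (Cpow c p)) (exp_term L B i j (k - p)%nat)))).
  - intros N. apply Csum_ext. intros k _. unfold exp_term at 2. rewrite Mpow_Mshift, <- Csum_mul_l by auto.
    apply Csum_ext. intros p Hp. unfold exp_term, binom.
    replace (Nat.leb p k) with true by (symmetry; apply Nat.leb_le; lia).
    unfold Binomial.C. apply C_ext; simpl; field; repeat split; apply INR_fact_neq_0.
  - apply Cauchy_product_cv with (al := fun p => / INR (fact p) * Cnorm1 c ^ p)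
      (be := fun q => / INR (fact q) * Mnorm1 L B ^ q) (sa := exp (Cnorm1 c)) (sb := exp (Mnorm1 L B)).
    + intros. eapply Rle_trans. apply Cnorm1_mul.
      rewrite Cnorm1_RtoC, Rabs_right by (left; apply inv_fact_pos).
      apply Rmult_le_compat_l. left; apply inv_fact_pos. apply Cnorm1_Cpow_le.
    + intros. apply Cnorm1_exp_term_le; auto.
    + apply Cexp_cv.
    + apply Mexp_cv; auto.
    + apply exp_series_cv.
    + apply exp_series_cv.
    + apply exp_Cauchy_product_cv.
Qed.

Lemma Cexp_C0 : Cexp C0 = C1.
Proof.
  apply Mexp_eq, Ccv_S, Ccv_ext with (fun _ => C1); [| apply Ccv_const].
  intros N. rewrite Csum_shift, (Csum_ext N _ (fun _ => C0)), Csum_C0.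
  - unfold exp_term. simpl. Cring.
  - intros. unfold exp_term. rewrite Mpow_dim1. simpl. Cring.
Qed.

Lemma Cexp_opp_r c : Cmul (Cexp c) (Cexp (Copp c)) = C1.
Proof.
  rewrite <- (Mexp_dim1 (fun _ _ => Copp c)), <- Mexp_Mshift by lia.
  rewrite Mexp_dim1, <- Cexp_C0. f_equal. unfold Mshift, Madd, Mscale, Mid. simpl. Cring.
Qed.

Definition Mconj (A : Mat) : Mat := fun p q => Cconj (A p q).

Lemma Mpow_Mconj d A k i j : Mpow d (Mconj A) k i j = Cconj (Mpow d A k i j).
Proof.
  revert i j; induction k; intros; simpl.
  - unfold Mid; destruct (Nat.eqb i j); Cring.
  - unfold Mmul. rewrite Cconj_Csum. apply Csum_ext; intros. rewrite IHk. unfold Mconj. Cring.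
Qed.

Lemma Mexp_Mconj d A i j : (j < d)%nat -> Mexp d (Mconj A) i j = Cconj (Mexp d A i j).
Proof.
  intros Hj. destruct (Mexp_cv d A i j Hj) as [H1 H2].
  apply Mexp_eq. split; simpl.
  - eapply Un_cv_ext. 2: exact H1. intros. rewrite !Cre_Csum. apply Rsumn_ext; intros.
    unfold exp_term. rewrite Mpow_Mconj. simpl. ring.
  - apply CV_opp in H2. eapply Un_cv_ext. 2: exact H2. intros. unfold opp_seq.
    rewrite !Cim_Csum, <- (Rmult_1_l (Rsumn _ _)), Ropp_mult_distr_l, <- Rsumn_mul_l.
    apply Rsumn_ext; intros. unfold exp_term. rewrite Mpow_Mconj. simpl. ring.
Qed.

Lemma Mpow_S_l d A k i j : (i < d)%nat -> (j < d)%nat ->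
  Mpow d A (S k) i j = Csum d (fun p => Cmul (A i p) (Mpow d A k p j)).
Proof.
  revert i j. induction k; intros i j Hi Hj.
  - simpl. unfold Mmul, Mid.
    rewrite (Csum_ext d _ (fun p => if Nat.eqb p i then A p j else C0)),
            (Csum_ext d (fun p => Cmul (A i p) _) (fun p => if Nat.eqb p j then A i p else C0)),
            !Csum_delta_lt; auto.
    + intros p _. destruct (Nat.eqb_spec p j); Cring.
    + intros p _. rewrite Nat.eqb_sym. destruct (Nat.eqb_spec p i); subst; Cring.
  - change (Mpow d A (S (S k)) i j) with (Csum d (fun p => Cmul (Mpow d A (S k) i p) (A p j))).
    rewrite (Csum_ext d _ (fun p => Csum d (fun q => Cmul (A i q) (Cmul (Mpow d A k q p) (A p j))))).
    + rewrite Csum_comm. apply Csum_ext; intros. now rewrite Csum_mul_l.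
    + intros. rewrite IHk, <- Csum_mul_r; auto. apply Csum_ext; intros. Cring.
Qed.

Section SymmetricMatrix.

Variables (d : nat) (A : Mat).
Hypothesis A_sym : forall p q, (p < d)%nat -> (q < d)%nat -> A p q = A q p.

Lemma Mpow_sym k i j : (i < d)%nat -> (j < d)%nat -> Mpow d A k i j = Mpow d A k j i.
Proof.
  revert i j. induction k; intros i j Hi Hj.
  - simpl. unfold Mid. now rewrite Nat.eqb_sym.
  - rewrite (Mpow_S_l d A k j i); auto. simpl. unfold Mmul. apply Csum_ext; intros.
    rewrite IHk, A_sym; auto. Cring.
Qed.

Lemma Mexp_sym i j : (i < d)%nat -> (j < d)%nat -> Mexp d A i j = Mexp d A j i.
Proof.
  intros. unfold Mexp. f_equal. extensionality N. apply Csum_ext; intros. now rewrite Mpow_sym.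
Qed.

End SymmetricMatrix.

Lemma vnorm_scale_delta d z b : (b < d)%nat -> vnorm d (Vscale z (delta b)) = Cmod z.
Proof.
  intros Hb. unfold vnorm.
  rewrite (Rsumn_ext d _ (fun i => if Nat.eqb i b then Cmod z ^ 2 else 0)), Rsumn_delta.
  - apply Nat.ltb_lt in Hb. rewrite Hb. apply sqrt_pow2, Cmod_ge0.
  - intros i _. unfold Vscale, delta. destruct (Nat.eqb i b).
    + now replace (Cmul z C1) with z by Cring.
    + replace (Cmul z C0) with C0 by Cring. unfold Cmod; simpl.
      replace (0 * (0 * 1) + 0 * (0 * 1)) with 0 by ring. rewrite sqrt_0. ring.
Qed.

Lemma vnorm_delta d b : (b < d)%nat -> vnorm d (delta b) = 1.
Proof.
  intros. rewrite <- Cmod_C1, <- (vnorm_scale_delta d C1 b); auto.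
  f_equal. unfold Vscale. extensionality i. Cring.
Qed.

Lemma inner_delta_r d u c : (c < d)%nat -> inner d u (delta c) = Cconj (u c).
Proof.
  intros Hc. unfold inner, delta. rewrite <- (Csum_delta_lt d c (fun i => Cconj (u i))) by auto.
  apply Csum_ext; intros i _. destruct (Nat.eqb i c); Cring.
Qed.

Lemma Cnorm1_unit_vector_le d u k : vnorm d u = 1 -> (k < d)%nat -> Cnorm1 (u k) <= 2.
Proof.
  intros Hu Hk. unfold vnorm in Hu.
  assert (Hs : Rsumn d (fun i => Cmod (u i) ^ 2) = 1).
  { rewrite <- (sqrt_def (Rsumn d (fun i => Cmod (u i) ^ 2))), Hu; [ring|].
    apply Rsumn_nonneg; intros; apply pow2_ge_0. }
  assert (Cmod (u k) ^ 2 <= 1).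
  { rewrite <- Hs. apply (Rsumn_term_le d (fun i => Cmod (u i) ^ 2)); auto. intros; apply pow2_ge_0. }
  rewrite Cmod_sqr in H. unfold Cnorm1.
  assert (Rabs (Cre (u k)) <= 1) by (apply Rabs_le; nra).
  assert (Rabs (Cim (u k)) <= 1) by (apply Rabs_le; nra).
  lra.
Qed.

Lemma vnorm_Mapply_bounded d A :
  exists M, forall u, vnorm d u = 1 -> vnorm d (Mapply d A u) <= M.
Proof.
  set (bnd i := 2 * Rsumn d (fun k => Cnorm1 (A i k))).
  exists (sqrt (Rsumn d (fun i => bnd i ^ 2))). intros u Hu. apply sqrt_le_1_alt.
  apply Rsumn_le; intros i Hi. eapply Rle_trans. apply Cmod_sqr_le_Cnorm1.
  assert (Cnorm1 (Mapply d A u i) <= bnd i).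
  { unfold Mapply, bnd. eapply Rle_trans. apply Cnorm1_Csum. rewrite <- Rsumn_mul_l.
    apply Rsumn_le; intros k Hk. eapply Rle_trans. apply Cnorm1_mul.
    pose proof (Cnorm1_ge0 (A i k)). pose proof (Cnorm1_unit_vector_le d u k Hu Hk). nra. }
  pose proof (Cnorm1_ge0 (Mapply d A u i)). nra.
Qed.

Lemma opnorm_ge d A v : vnorm d v = 1 -> vnorm d (Mapply d A v) <= opnorm d A.
Proof.
  intros Hv. set (P x := exists v : Vec, vnorm d v = 1 /\ x = vnorm d (Mapply d A v)).
  assert (Hlub : is_lub P (opnorm d A)).
  { apply (epsilon_spec (inhabits 0) (fun l => is_lub P l)).
    destruct (vnorm_Mapply_bounded d A) as [M HM].
    destruct (completeness P) as [l Hl].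
    - exists M. intros x [u [Hu ->]]. auto.
    - exists (vnorm d (Mapply d A v)), v; auto.
    - exists l; auto. }
  apply Hlub. exists v; auto.
Qed.

Section InvariantSubspace.

Variables (D L : nat) (A K : Mat) (psi : nat -> nat).
Hypothesis psi_lt : forall q, (q < L)%nat -> (psi q < D)%nat.
Hypothesis A_psi : forall j, (j < L)%nat ->
  Mapply D A (delta (psi j)) = Vsum L (fun q => Vscale (K q j) (delta (psi q))).

Lemma Mpow_invariant k j : (j < L)%nat ->
  Mapply D (Mpow D A k) (delta (psi j)) = Vsum L (fun q => Vscale (Mpow L K k q j) (delta (psi q))).
Proof.
  revert j. induction k; intros j Hj.
  - simpl. rewrite Mapply_delta by auto. extensionality a. unfold Vsum, Vscale.
    transitivity (Csum L (fun q => if Nat.eqb q j then delta (psi q) a else C0)).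
    + now rewrite Csum_delta_lt.
    + apply Csum_ext; intros q _. unfold Mid. destruct (Nat.eqb q j); Cring.
  - simpl. rewrite Mapply_mul, A_psi, Mapply_Vsum by auto.
    rewrite (Vsum_ext _ _ (fun q => Vscale (K q j) (Vsum L (fun p => Vscale (Mpow L K k p q) (delta (psi p)))))).
    2:{ intros. rewrite Mapply_Vscale, IHk; auto. }
    extensionality a. unfold Vsum, Vscale, Mmul.
    transitivity (Csum L (fun q => Csum L (fun p => Cmul (Cmul (Mpow L K k p q) (K q j)) (delta (psi p) a)))).
    + apply Csum_ext; intros. rewrite <- Csum_mul_l. apply Csum_ext; intros. Cring.
    + rewrite Csum_comm. apply Csum_ext; intros. now rewrite <- Csum_mul_r.
Qed.

Lemma Mexp_invariant j : (j < L)%nat ->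
  Mapply D (Mexp D A) (delta (psi j)) = Vsum L (fun q => Vscale (Mexp L K q j) (delta (psi q))).
Proof.
  intros Hj. rewrite Mapply_delta by auto. extensionality a. apply Mexp_eq.
  apply Ccv_ext with (fun N => Csum L (fun q => Cmul (Csum N (exp_term L K q j)) (delta (psi q) a))).
  - intros N. unfold exp_term.
    transitivity (Csum N (fun k => Csum L (fun q =>
                    Cmul (Cmul (RtoC (/ INR (fact k))) (Mpow L K k q j)) (delta (psi q) a)))).
    + rewrite Csum_comm. apply Csum_ext; intros. now rewrite Csum_mul_r.
    + apply Csum_ext; intros k _.
      pose proof (f_equal (fun v => v a) (Mpow_invariant k j Hj)) as E. cbv beta in E.
      rewrite Mapply_delta in E by auto. rewrite E. unfold Vsum, Vscale. rewrite <- Csum_mul_l.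
      apply Csum_ext; intros; Cring.
  - apply Ccv_Csum. intros. apply Ccv_mul. apply Mexp_cv; auto. apply Ccv_const.
Qed.

End InvariantSubspace.

(** * The spin chain on basis states *)

Lemma lt_pow2_testbit a N : (a < 2^N)%nat <-> forall k, (N <= k)%nat -> Nat.testbit a k = false.
Proof.
  split; intros H.
  - intros k Hk. rewrite Nat.testbit_eqb, Nat.div_small; auto.
    apply Nat.lt_le_trans with (2^N)%nat; auto. apply Nat.pow_le_mono_r; lia.
  - replace a with (a mod 2^N)%nat.
    + apply Nat.mod_upper_bound. apply Nat.pow_nonzero; lia.
    + apply Nat.bits_inj; intro k. destruct (Nat.lt_ge_cases k N).
      * now rewrite Nat.mod_pow2_bits_low.
      * rewrite Nat.mod_pow2_bits_high, H; auto.
Qed.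

Definition putbit (b k : nat) (x : bool) : nat := if x then Nat.setbit b k else Nat.clearbit b k.

Lemma testbit_putbit b k x i :
  Nat.testbit (putbit b k x) i = if Nat.eqb k i then x else Nat.testbit b i.
Proof.
  unfold putbit; destruct x.
  - rewrite Nat.setbit_eqb. now destruct (Nat.eqb k i).
  - rewrite Nat.clearbit_eqb. destruct (Nat.eqb k i); simpl; auto using andb_false_r, andb_true_r.
Qed.

Lemma putbit_lt N b k x : (b < 2^N)%nat -> (k < N)%nat -> (putbit b k x < 2^N)%nat.
Proof.
  rewrite !lt_pow2_testbit. intros Hb Hk i Hi. rewrite testbit_putbit.
  destruct (Nat.eqb_spec k i); [lia | auto].
Qed.

Lemma putbit_testbit b k : putbit b k (Nat.testbit b k) = b.
Proof. apply Nat.bits_inj; intro i. rewrite testbit_putbit. destruct (Nat.eqb_spec k i); subst; auto. Qed.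

Lemma clearbit_putbit b k x : Nat.clearbit (putbit b k x) k = Nat.clearbit b k.
Proof.
  apply Nat.bits_inj; intro i. rewrite !Nat.clearbit_eqb, testbit_putbit.
  destruct (Nat.eqb k i); simpl; auto. now rewrite !andb_false_r.
Qed.

Lemma site_op_entry N k P a b : (k < N)%nat -> (b < 2^N)%nat ->
  site_op (2^N) k P a b =
  Cadd (Cmul (P false (Nat.testbit b k)) (delta (putbit b k false) a))
       (Cmul (P true (Nat.testbit b k)) (delta (putbit b k true) a)).
Proof.
  intros Hk Hb. unfold site_op, delta.
  assert (Hlt : forall x, Nat.ltb (putbit b k x) (2^N) = true) by (intros; apply Nat.ltb_lt, putbit_lt; auto).
  apply Nat.ltb_lt in Hb.
  destruct (Nat.eqb_spec a (putbit b k false)), (Nat.eqb_spec a (putbit b k true)); subst.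
  - apply (f_equal (fun a => Nat.testbit a k)) in e0. rewrite !testbit_putbit, Nat.eqb_refl in e0. discriminate.
  - rewrite Hlt, Hb, clearbit_putbit, Nat.eqb_refl, testbit_putbit, Nat.eqb_refl. simpl. Cring.
  - rewrite Hlt, Hb, clearbit_putbit, Nat.eqb_refl, testbit_putbit, Nat.eqb_refl. simpl. Cring.
  - destruct (Nat.eqb_spec (Nat.clearbit a k) (Nat.clearbit b k)) as [E|]; [exfalso|].
    + (* [a] and [b] agree off bit [k], so [a] is one of the two [putbit]s *)
      assert (a = putbit b k (Nat.testbit a k)).
      { apply Nat.bits_inj; intro i. rewrite testbit_putbit. destruct (Nat.eqb_spec k i); subst; auto.
        apply (f_equal (fun a => Nat.testbit a i)) in E. rewrite !Nat.clearbit_eqb in E.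
        apply Nat.eqb_neq in n1. rewrite n1, !andb_true_r in E. auto. }
      destruct (Nat.testbit a k); auto.
    + rewrite andb_false_r. Cring.
Qed.

Definition flip (b k : nat) : nat := putbit b k (negb (Nat.testbit b k)).

Lemma testbit_flip b k i :
  Nat.testbit (flip b k) i = if Nat.eqb k i then negb (Nat.testbit b k) else Nat.testbit b i.
Proof. apply testbit_putbit. Qed.

Lemma flip_lt N b k : (b < 2^N)%nat -> (k < N)%nat -> (flip b k < 2^N)%nat.
Proof. apply putbit_lt. Qed.

Section SiteOperators.

Variables (N k b : nat).
Hypotheses (Hk : (k < N)%nat) (Hb : (b < 2^N)%nat).

Lemma site_op_delta P :
  Mapply (2^N) (site_op (2^N) k P) (delta b) =
  Vadd (Vscale (P false (Nat.testbit b k)) (delta (putbit b k false)))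
       (Vscale (P true (Nat.testbit b k)) (delta (putbit b k true))).
Proof. rewrite Mapply_delta by auto. extensionality a. now rewrite site_op_entry. Qed.

Lemma sx_delta : Mapply (2^N) (site_op (2^N) k sx) (delta b) = delta (flip b k).
Proof.
  rewrite site_op_delta. extensionality a. unfold Vadd, Vscale, flip, sx.
  destruct (Nat.testbit b k); simpl; Cring.
Qed.

Definition sy_phase (x : bool) : C := if x then Copp Ci else Ci.

Lemma sy_delta :
  Mapply (2^N) (site_op (2^N) k sy) (delta b) = Vscale (sy_phase (Nat.testbit b k)) (delta (flip b k)).
Proof.
  rewrite site_op_delta. extensionality a. unfold Vadd, Vscale, flip, sy, sy_phase.
  destruct (Nat.testbit b k); simpl; Cring.
Qed.

Definition sz_sign (x : bool) : C := if x then Copp C1 else C1.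

Lemma sz_delta :
  Mapply (2^N) (site_op (2^N) k sz) (delta b) = Vscale (sz_sign (Nat.testbit b k)) (delta b).
Proof.
  rewrite site_op_delta. extensionality a. unfold Vadd, Vscale, sz, sz_sign.
  pose proof (putbit_testbit b k). destruct (Nat.testbit b k); rewrite H; Cring.
Qed.

End SiteOperators.

Definition hop (N k : nat) : Mat :=
  Madd (Mmul (2^N) (site_op (2^N) k sx) (site_op (2^N) (S k) sx))
       (Mmul (2^N) (site_op (2^N) k sy) (site_op (2^N) (S k) sy)).

Definition xy_ham (N : nat) (w : nat -> R) : Mat :=
  Mopp (Madd (Msumn (N - 1) (hop N))
             (Msumn N (fun k => Mscale (RtoC (w k)) (site_op (2^N) k sz)))).

Lemma loc_add m k : loc m (m + Z.of_nat k) = k.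
Proof. unfold loc. replace (m + Z.of_nat k - m)%Z with (Z.of_nat k) by lia. apply Nat2Z.id. Qed.

Lemma loc_lt_nsites m n j : (m <= j)%Z -> (j <= n)%Z -> (loc m j < nsites m n)%nat.
Proof. intros. unfold loc, nsites. apply Nat2Z.inj_lt. rewrite !Z2Nat.id; lia. Qed.

Lemma Hchain_eq m n nu : Hchain m n nu = xy_ham (nsites m n) (fun k => nu (m + Z.of_nat k)%Z).
Proof.
  unfold Hchain, xy_ham, hop, sigx, sigy, sigz, hdim. cbv zeta. do 2 f_equal.
  - f_equal. extensionality k.
    replace (m + Z.of_nat k + 1)%Z with (m + Z.of_nat (S k))%Z by lia. now rewrite !loc_add.
  - f_equal. extensionality k. now rewrite loc_add.
Qed.

Lemma hop_delta N k b : (S k < N)%nat -> (b < 2^N)%nat ->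
  Mapply (2^N) (hop N k) (delta b) =
  Vscale (if Bool.eqb (Nat.testbit b k) (Nat.testbit b (S k)) then C0 else RtoC 2)
         (delta (flip (flip b (S k)) k)).
Proof.
  intros. unfold hop. rewrite Mapply_add, !Mapply_mul.
  rewrite sx_delta, sx_delta, sy_delta, Mapply_Vscale, sy_delta; try lia; try apply flip_lt; try lia; auto.
  rewrite testbit_flip. replace (Nat.eqb (S k) k) with false by (symmetry; apply Nat.eqb_neq; lia).
  extensionality a. unfold Vadd, Vscale, sy_phase.
  destruct (Nat.testbit b k), (Nat.testbit b (S k)); simpl; Cring.
Qed.

(* Bit 1 is spin down, which [aop] annihilates: [vac N] is the Jordan-Wigner vacuum and
   [particle N j] the state with a single particle, at site [j]. *)
Definition vac (N : nat) : nat := Nat.ones N.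
Definition particle (N j : nat) : nat := Nat.clearbit (Nat.ones N) j.

Lemma testbit_vac N k : Nat.testbit (vac N) k = Nat.ltb k N.
Proof.
  unfold vac. destruct (Nat.ltb_spec k N).
  - now apply Nat.ones_spec_low.
  - now apply Nat.ones_spec_high.
Qed.

Lemma testbit_particle N j k : Nat.testbit (particle N j) k = (Nat.ltb k N && negb (Nat.eqb j k))%bool.
Proof. unfold particle. rewrite Nat.clearbit_eqb. fold (vac N). now rewrite testbit_vac. Qed.

Lemma vac_lt N : (vac N < 2^N)%nat.
Proof. apply lt_pow2_testbit. intros. rewrite testbit_vac. now apply Nat.ltb_ge. Qed.

Lemma particle_lt N j : (particle N j < 2^N)%nat.
Proof.
  apply lt_pow2_testbit. intros. rewrite testbit_particle.
  destruct (Nat.ltb_spec k N); auto; lia.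
Qed.

Ltac bits_crunch :=
  apply Nat.bits_inj; let i := fresh "i" in intro i;
  rewrite ?testbit_flip, ?testbit_particle, ?testbit_vac;
  repeat match goal with
         | |- context [Nat.eqb ?a ?b] => destruct (Nat.eqb_spec a b)
         | |- context [Nat.ltb ?a ?b] => destruct (Nat.ltb_spec a b)
         end; simpl; try lia; auto.

Lemma flip_vac N j : (j < N)%nat -> flip (vac N) j = particle N j.
Proof. intros. bits_crunch. Qed.

Lemma flip_particle N j : (j < N)%nat -> flip (particle N j) j = vac N.
Proof. intros. bits_crunch. Qed.

Definition vac_energy (N : nat) (w : nat -> R) : C := Csum N (fun k => RtoC (w k)).

Lemma xy_ham_vac N w :
  Mapply (2^N) (xy_ham N w) (delta (vac N)) = Vscale (vac_energy N w) (delta (vac N)).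
Proof.
  unfold xy_ham. rewrite Mapply_opp, Mapply_add, !Mapply_Msumn.
  rewrite (Vsum_ext _ _ (fun k => Vscale C0 (delta (vac N)))),
          (Vsum_ext N _ (fun k => Vscale (Cmul (RtoC (w k)) (Copp C1)) (delta (vac N)))),
          !Vsum_scale_r, Csum_C0, Csum_mul_r.
  - extensionality a. unfold vac_energy, Vscale, Vadd. Cring.
  - intros. rewrite Mapply_scale, sz_delta, testbit_vac by (auto; apply vac_lt).
    apply Nat.ltb_lt in H. rewrite H. extensionality a. unfold Vscale, sz_sign. Cring.
  - intros. rewrite hop_delta, !testbit_vac by (lia || apply vac_lt).
    replace (Nat.ltb k N) with true by (symmetry; apply Nat.ltb_lt; lia).
    replace (Nat.ltb (S k) N) with true by (symmetry; apply Nat.ltb_lt; lia).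
    extensionality a. unfold Vscale. simpl. Cring.
Qed.

Definition schrodinger (N : nat) (w : nat -> R) : Mat := fun p q =>
  if (Nat.ltb p N && Nat.ltb q N)%bool then
    (if Nat.eqb p q then RtoC (w p)
     else if (Nat.eqb p (S q) || Nat.eqb q (S p))%bool then C1 else C0)
  else C0.

Lemma Heff_eq m n nu : Heff m n nu = schrodinger (nsites m n) (fun p => nu (m + Z.of_nat p)%Z).
Proof. reflexivity. Qed.

Lemma schrodinger_sym N w p q : schrodinger N w p q = schrodinger N w q p.
Proof.
  unfold schrodinger.
  repeat match goal with
         | |- context [Nat.eqb ?a ?b] => destruct (Nat.eqb_spec a b)
         | |- context [Nat.ltb ?a ?b] => destruct (Nat.ltb_spec a b)
         end; simpl; subst; try lia; auto.
Qed.

Lemma schrodinger_real N w p q : Cim (schrodinger N w p q) = 0.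
Proof.
  unfold schrodinger. destruct (Nat.ltb p N && Nat.ltb q N)%bool; auto.
  destruct (Nat.eqb p q); auto. destruct (Nat.eqb p (S q) || Nat.eqb q (S p))%bool; auto.
Qed.

Ltac eqb_cases :=
  repeat match goal with |- context [Nat.eqb ?a ?b] => destruct (Nat.eqb_spec a b) end;
  subst; simpl; try lia; Cring.

(* On one-particle states the spin chain acts as [vac_energy - 2 * H_eff]. *)
Definition particle_ham (N : nat) (w : nat -> R) : Mat :=
  Mshift (vac_energy N w) (Mscale (RtoC (-2)) (schrodinger N w)).

Section OneParticle.

Variables (N : nat) (w : nat -> R) (j : nat).
Hypothesis Hj : (j < N)%nat.

Let cond2 (c : bool) : C := if c then RtoC 2 else C0.

Lemma hop_particle k : (S k < N)%nat ->
  Mapply (2^N) (hop N k) (delta (particle N j)) =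
  Vadd (Vscale (cond2 (Nat.eqb k j)) (delta (particle N (S j))))
       (Vscale (cond2 (Nat.eqb (S k) j)) (delta (particle N (pred j)))).
Proof.
  intros Hk. rewrite hop_delta, !testbit_particle by (lia || apply particle_lt).
  replace (Nat.ltb k N) with true by (symmetry; apply Nat.ltb_lt; lia).
  replace (Nat.ltb (S k) N) with true by (symmetry; apply Nat.ltb_lt; lia).
  unfold cond2. extensionality a. unfold Vscale, Vadd.
  destruct (Nat.eqb_spec j k); [|destruct (Nat.eqb_spec j (S k))]; subst.
  - replace (flip (flip (particle N k) (S k)) k) with (particle N (S k)) by bits_crunch.
    eqb_cases.
  - replace (flip (flip (particle N (S k)) (S k)) k) with (particle N k) by bits_crunch.
    eqb_cases.
  - eqb_cases.
Qed.

Lemma hops_particle :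
  Mapply (2^N) (Msumn (N - 1) (hop N)) (delta (particle N j)) =
  Vadd (Vscale (cond2 (Nat.ltb (S j) N)) (delta (particle N (S j))))
       (Vscale (cond2 (Nat.ltb 0 j)) (delta (particle N (pred j)))).
Proof.
  rewrite Mapply_Msumn, (Vsum_ext (N - 1) _ _ (fun k Hk => hop_particle k ltac:(lia))).
  rewrite Vsum_add, !Vsum_scale_r. f_equal; f_equal; unfold cond2.
  - rewrite Csum_delta. destruct (Nat.ltb_spec j (N - 1)), (Nat.ltb_spec (S j) N); auto; lia.
  - destruct j as [|j']; simpl.
    + apply Csum_C0.
    + rewrite Csum_delta. destruct (Nat.ltb_spec j' (N - 1)); auto; lia.
Qed.

Lemma fields_particle :
  Mapply (2^N) (Msumn N (fun k => Mscale (RtoC (w k)) (site_op (2^N) k sz))) (delta (particle N j)) =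
  Vscale (Csub (RtoC (2 * w j)) (vac_energy N w)) (delta (particle N j)).
Proof.
  rewrite Mapply_Msumn.
  rewrite (Vsum_ext N _ (fun k => Vscale (Csub (if Nat.eqb k j then RtoC (2 * w k) else C0) (RtoC (w k)))
                                         (delta (particle N j)))).
  - rewrite Vsum_scale_r. unfold Csub, vac_energy. rewrite Csum_add, Csum_opp, Csum_delta_lt by auto.
    reflexivity.
  - intros k Hk. rewrite Mapply_scale, sz_delta, testbit_particle by (auto; apply particle_lt).
    apply Nat.ltb_lt in Hk. rewrite Hk. extensionality a. unfold Vscale, sz_sign.
    rewrite Nat.eqb_sym. eqb_cases.
Qed.

Lemma particle_ham_column :
  Vsum N (fun q => Vscale (particle_ham N w q j) (delta (particle N q))) =
  Vadd (Vscale (Csub (vac_energy N w) (RtoC (2 * w j))) (delta (particle N j)))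
       (Vadd (Vscale (Copp (cond2 (Nat.ltb (S j) N))) (delta (particle N (S j))))
             (Vscale (Copp (cond2 (Nat.ltb 0 j))) (delta (particle N (pred j))))).
Proof.
  rewrite (Vsum_ext N _ (fun q =>
     Vadd (Vscale (if Nat.eqb q j then Csub (vac_energy N w) (RtoC (2 * w j)) else C0) (delta (particle N j)))
       (Vadd (Vscale (if Nat.eqb q (S j) then RtoC (-2) else C0) (delta (particle N (S j))))
             (Vscale (if Nat.eqb (S q) j then RtoC (-2) else C0) (delta (particle N (pred j))))))).
  2:{ intros q Hq. unfold particle_ham, Mshift, Madd, Mscale, Mid, schrodinger.
      replace (Nat.ltb q N) with true by (symmetry; apply Nat.ltb_lt; lia).
      replace (Nat.ltb j N) with true by (symmetry; apply Nat.ltb_lt; lia).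
      extensionality a. unfold Vscale, Vadd. eqb_cases. }
  rewrite !Vsum_add, !Vsum_scale_r, !Csum_delta. unfold cond2.
  replace (Nat.ltb j N) with true by (symmetry; apply Nat.ltb_lt; lia).
  destruct j as [|j']; simpl.
  - rewrite Csum_C0. extensionality a. unfold Vscale, Vadd. destruct (Nat.ltb 1 N); Cring.
  - rewrite Csum_delta_lt by lia.
    extensionality a. unfold Vscale, Vadd. destruct (Nat.ltb (S (S j')) N); Cring.
Qed.

Lemma xy_ham_particle :
  Mapply (2^N) (xy_ham N w) (delta (particle N j)) =
  Vsum N (fun q => Vscale (particle_ham N w q j) (delta (particle N q))).
Proof.
  rewrite particle_ham_column. unfold xy_ham.
  rewrite Mapply_opp, Mapply_add, hops_particle, fields_particle.
  extensionality a. unfold Vscale, Vadd. Cring.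
Qed.

End OneParticle.

Section JordanWigner.

Variables (m n : Z).
Let N := nsites m n.

Fixpoint jw_sign (b k : nat) : C :=
  match k with O => C1 | S k' => Cmul (jw_sign b k') (sz_sign (Nat.testbit b k')) end.

Lemma zstring_delta k b : (k <= N)%nat -> (b < 2^N)%nat ->
  Mapply (hdim m n) (zstring m n k) (delta b) = Vscale (jw_sign b k) (delta b).
Proof.
  intros Hk Hb. induction k; simpl.
  - rewrite Mapply_delta by auto. extensionality a; unfold Vscale, Mid, delta.
    rewrite Nat.eqb_sym. destruct (Nat.eqb b a); Cring.
  - rewrite Mapply_mul. unfold sigz, hdim. rewrite loc_add, sz_delta, Mapply_Vscale by (auto; lia).
    unfold hdim in IHk. rewrite IHk by lia. extensionality a; unfold Vscale; Cring.
Qed.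

Lemma aop_delta l b : (loc m l < N)%nat -> (b < 2^N)%nat ->
  Mapply (hdim m n) (aop m n l) (delta b) =
  Vscale (if Nat.testbit b (loc m l) then C0 else C1) (delta (flip b (loc m l))).
Proof.
  intros. unfold aop, sigx, sigy, hdim, Msub.
  rewrite Mapply_scale, Mapply_add, Mapply_opp, Mapply_scale, sx_delta, sy_delta by auto.
  extensionality a; unfold Vscale, Vadd, sy_phase. destruct (Nat.testbit b (loc m l)); Cring.
Qed.

Lemma cJW_delta l b : (loc m l < N)%nat -> (b < 2^N)%nat ->
  Mapply (hdim m n) (cJW m n l) (delta b) =
  Vscale (if Nat.testbit b (loc m l) then C0 else jw_sign (flip b (loc m l)) (loc m l))
         (delta (flip b (loc m l))).
Proof.
  intros. unfold cJW. rewrite Mapply_mul, aop_delta, Mapply_Vscale, zstring_delta by (auto using flip_lt; lia).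
  extensionality a; unfold Vscale. destruct (Nat.testbit b (loc m l)); Cring.
Qed.

Lemma cJW_vac l : (loc m l < N)%nat -> Mapply (hdim m n) (cJW m n l) (delta (vac N)) = Vzero.
Proof.
  intros Hl. rewrite cJW_delta, testbit_vac by (auto; apply vac_lt).
  apply Nat.ltb_lt in Hl. rewrite Hl. extensionality a; unfold Vscale, Vzero; Cring.
Qed.

Lemma cJW_particle l q : (loc m l < N)%nat -> (q < N)%nat ->
  Mapply (hdim m n) (cJW m n l) (delta (particle N q)) =
  Vscale (if Nat.eqb q (loc m l) then jw_sign (vac N) (loc m l) else C0) (delta (vac N)).
Proof.
  intros Hl Hq. rewrite cJW_delta, testbit_particle by (auto; apply particle_lt).
  apply Nat.ltb_lt in Hl as Hl'. rewrite Hl'. simpl.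
  destruct (Nat.eqb_spec q (loc m l)) as [->|]; simpl.
  - now rewrite flip_particle.
  - extensionality a; unfold Vscale; Cring.
Qed.

Lemma adag_vac r : (loc m r < N)%nat ->
  Mapply (hdim m n) (adag m n r) (delta (vac N)) = delta (particle N (loc m r)).
Proof.
  intros Hr. unfold adag, sigx, sigy, hdim.
  rewrite Mapply_scale, Mapply_add, Mapply_scale, sx_delta, sy_delta, testbit_vac, flip_vac
    by (auto; apply vac_lt).
  apply Nat.ltb_lt in Hr. rewrite Hr. extensionality a; unfold Vscale, Vadd, sy_phase; Cring.
Qed.

Lemma Cmod_jw_sign_vac k : (k <= N)%nat -> Cmod (jw_sign (vac N) k) = 1.
Proof.
  intros Hk. induction k; simpl.
  - apply Cmod_C1.
  - rewrite Cmod_mul, IHk, testbit_vac by lia.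
    replace (Nat.ltb k N) with true by (symmetry; apply Nat.ltb_lt; lia).
    unfold sz_sign, Cmod. simpl. replace (- (1) * (- (1) * 1) + - 0 * (- 0 * 1)) with 1 by ring.
    rewrite sqrt_1. ring.
Qed.

End JordanWigner.

Section Chain.

Variables (m n : Z) (nu : Z -> R).
Let N := nsites m n.
Let w (k : nat) : R := nu (m + Z.of_nat k)%Z.

Lemma Mexp_Hchain_vac s :
  Mapply (hdim m n) (Mexp (hdim m n) (Mscale s (Hchain m n nu))) (delta (vac N)) =
  Vscale (Cexp (Cmul s (vac_energy N w))) (delta (vac N)).
Proof.
  rewrite Hchain_eq. unfold hdim. fold N w.
  rewrite (Mexp_invariant (2^N) 1 _ (fun _ _ => Cmul s (vac_energy N w)) (fun _ => vac N)) with (j := 0%nat).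
  - unfold Vsum, Vscale. extensionality a. simpl. rewrite Mexp_dim1. Cring.
  - intros. apply vac_lt.
  - intros. rewrite Mapply_scale, xy_ham_vac. unfold Vsum, Vscale. extensionality a. simpl. Cring.
  - lia.
Qed.

Lemma Mexp_Hchain_particle s j : (j < N)%nat ->
  Mapply (hdim m n) (Mexp (hdim m n) (Mscale s (Hchain m n nu))) (delta (particle N j)) =
  Vsum N (fun q => Vscale (Mexp N (Mscale s (particle_ham N w)) q j) (delta (particle N q))).
Proof.
  intros Hj. rewrite Hchain_eq. unfold hdim. fold N w.
  apply Mexp_invariant; auto.
  - intros. apply particle_lt.
  - intros. rewrite Mapply_scale, xy_ham_particle by auto. extensionality a. unfold Vsum, Vscale, Mscale.
    rewrite <- Csum_mul_l. apply Csum_ext; intros. Cring.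
Qed.

Lemma comm_vac l r t : (loc m l < N)%nat -> (loc m r < N)%nat ->
  Mapply (hdim m n) (Mcomm (hdim m n) (c_t m n nu l t) (adag m n r)) (delta (vac N)) =
  Vscale (Cmul (Cmul (Mexp N (Mscale (mkC 0 (- t)) (particle_ham N w)) (loc m l) (loc m r))
                     (jw_sign (vac N) (loc m l)))
               (Cexp (Cmul (mkC 0 t) (vac_energy N w))))
         (delta (vac N)).
Proof.
  intros Hl Hr. set (gam := Mexp N (Mscale (mkC 0 (- t)) (particle_ham N w)) (loc m l) (loc m r)).
  set (zz := jw_sign (vac N) (loc m l)).
  assert (Hannihilate : Mapply (hdim m n) (c_t m n nu l t) (delta (vac N)) = Vzero).
  { unfold c_t. cbv zeta. rewrite !Mapply_mul, Mexp_Hchain_vac, Mapply_Vscale, cJW_vac by auto.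
    now rewrite Vscale_Vzero, Mapply_Vzero. }
  assert (Hhop : Mapply (hdim m n) (c_t m n nu l t) (delta (particle N (loc m r))) =
                 Vscale (Cmul gam zz) (Vscale (Cexp (Cmul (mkC 0 t) (vac_energy N w))) (delta (vac N)))).
  { unfold c_t. cbv zeta. rewrite !Mapply_mul, Mexp_Hchain_particle, Mapply_Vsum by auto.
    rewrite (Vsum_ext N _ (fun q => Vscale (Mexp N (Mscale (mkC 0 (- t)) (particle_ham N w)) q (loc m r))
                                         (Vscale (if Nat.eqb q (loc m l) then zz else C0) (delta (vac N))))).
    2:{ intros. now rewrite Mapply_Vscale, cJW_particle. }
    replace (Vsum N _) with (Vscale (Cmul gam zz) (delta (vac N))).
    - now rewrite Mapply_Vscale, Mexp_Hchain_vac.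
    - extensionality a. unfold Vsum, Vscale.
      transitivity (Csum N (fun q => if Nat.eqb q (loc m l)
          then Cmul (Cmul (Mexp N (Mscale (mkC 0 (- t)) (particle_ham N w)) q (loc m r)) zz) (delta (vac N) a)
          else C0)).
      + now rewrite Csum_delta_lt.
      + apply Csum_ext; intros q _. destruct (Nat.eqb q (loc m l)); Cring. }
  unfold Mcomm, Msub. rewrite Mapply_add, Mapply_opp, !Mapply_mul, adag_vac by auto. fold N.
  rewrite Hannihilate, Mapply_Vzero, Hhop.
  extensionality a. unfold Vadd, Vscale, Vzero. Cring.
Qed.

Lemma particle_propagator t i j : (i < N)%nat -> (j < N)%nat ->
  Mexp N (Mscale (mkC 0 (- t)) (particle_ham N w)) i j =
  Cmul (Cexp (Copp (Cmul (mkC 0 t) (vac_energy N w))))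
       (Cconj (Mexp N (Mscale (mkC 0 (-2 * t)) (schrodinger N w)) j i)).
Proof.
  intros Hi Hj.
  replace (Mscale (mkC 0 (- t)) (particle_ham N w))
    with (Mshift (Copp (Cmul (mkC 0 t) (vac_energy N w))) (Mconj (Mscale (mkC 0 (-2 * t)) (schrodinger N w)))).
  - assert (Hsym : forall p q, (p < N)%nat -> (q < N)%nat ->
              Mscale (mkC 0 (-2 * t)) (schrodinger N w) p q = Mscale (mkC 0 (-2 * t)) (schrodinger N w) q p).
    { intros. unfold Mscale. now rewrite schrodinger_sym. }
    now rewrite Mexp_Mshift, Mexp_Mconj, (Mexp_sym N) by auto.
  - extensionality p; extensionality q. unfold particle_ham, Mshift, Madd, Mscale, Mid, Mconj.
    apply C_ext; simpl; rewrite schrodinger_real; destruct (Nat.eqb p q); simpl; ring.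
Qed.

End Chain.

Theorem proposition6p3 (m n : Z) (nu : Z -> R) (l r : Z) (t : R) :
  (m <= l)%Z -> (l <= r)%Z -> (r <= n)%Z ->
  opnorm (hdim m n) (Mcomm (hdim m n) (c_t m n nu l t) (adag m n r))
  >= Cmod (inner (nsites m n)
             (Mapply (nsites m n)
                (Mexp (nsites m n) (Mscale (mkC 0 (-2 * t)) (Heff m n nu)))
                (delta (loc m l)))
             (delta (loc m r))).
Proof.
  intros Hml Hlr Hrn.
  assert (Hl : (loc m l < nsites m n)%nat) by (apply loc_lt_nsites; lia).
  assert (Hr : (loc m r < nsites m n)%nat) by (apply loc_lt_nsites; lia).
  set (N := nsites m n) in *. set (w := fun k => nu (m + Z.of_nat k)%Z).
  set (c := Cmul (mkC 0 t) (vac_energy N w)).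
  set (amp := Mexp N (Mscale (mkC 0 (-2 * t)) (schrodinger N w)) (loc m r) (loc m l)).
  rewrite Heff_eq, Mapply_delta, inner_delta_r by auto. fold N w amp.
  apply Rle_ge. eapply Rle_trans.
  2:{ apply (opnorm_ge _ _ (delta (vac N))), vnorm_delta, vac_lt. }
  rewrite comm_vac, vnorm_scale_delta, particle_propagator by (auto || apply vac_lt). fold N w c amp.
  assert (Hphase : Cmod (Cexp c) * Cmod (Cexp (Copp c)) = 1) by now rewrite <- Cmod_mul, Cexp_opp_r, Cmod_C1.
  rewrite !Cmod_mul, (Cmod_jw_sign_vac m n), Cmod_conj by lia.
  replace (Cmod (Cexp (Copp c)) * Cmod amp * 1 * Cmod (Cexp c))
    with (Cmod (Cexp c) * Cmod (Cexp (Copp c)) * Cmod amp) by ring.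
  rewrite Hphase. lra.
Qed.
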